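(* Let $R\subseteq S$, $\sigma$ be as in the context, $n=n_1+\cdots+n_\ell$. Let $\mathbf{a}=(a_1,\ldots,a_\ell)\in(S^* )^\ell$ and $\beta_{i,j}\in S$ ($1\le i\le\ell$, $1\le j\le n_i$) satisfy: (i) $a_i-a_j^\beta\in S^*$ for all $\beta\in S^*$ and $1\le i<j\le\ell$; (ii) for each $i$, $\beta_{i,1},\ldots,\beta_{i,n_i}$ are $R$-linearly independent. Let $b_{i,j}=\sigma(\beta_{i,j})a_i\beta_{i,j}^{-1}$. Fix $1\le k\le n-1$ and $t=\lfloor (n-k)/2\rfloor$. Let $\mathbf{c}\in\mathcal{C}_k(\mathbf{a},\boldsymbol\beta)$, let $\mathbf{e}\in S^n$ with ${\rm wt}_{SR}(\mathbf{e})\le t$, and $\mathbf{r}=\mathbf{c}+\mathbf{e}$, with coordinates $c_{i,j},r_{i,j}$. Let $F,H\in S[x;\sigma]$ be the unique skew polynomials of degree less than $n$ with $F(b_{i,j})=c_{i,j}\beta_{i,j}^{-1}$ and $H(b_{i,j})=r_{i,j}\beta_{i,j}^{-1}$ for all $i,j$. If $L,Q\in S[x;\sigma]$ are such that $L$ is monic, $\deg(L)\le t$, $\deg(Q)\le t+k-1$, and $(LH)(b_{i,j})=Q(b_{i,j})$ for all $1\le j\le n_i$, $1\le i\le\ell$, then $Q=LF$.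
   Context: $R$ is a finite commutative chain ring with maximal ideal $\mathfrak{m}$, $q=|R/\mathfrak{m}|$; $S=R[x]/(h)$ with $h$ monic of degree $m$ irreducible modulo $\mathfrak{m}$, local with maximal ideal $\mathfrak{M}=\mathfrak{m}S$ and unit group $S^*=S\setminus\mathfrak{M}$. $\sigma$ is a ring automorphism of $S$ generating the Galois group of $R\subseteq S$, with fixed ring $R$, reducing modulo $\mathfrak{M}$ to $y\mapsto y^q$. $S[x;\sigma]$ is the skew polynomial ring with $xa=\sigma(a)x$. Remainder evaluation: for $P\in S[x;\sigma]$ and $b\in S$, $P(b)$ is the unique $c\in S$ with $P=Q'(x-b)+c$ for some $Q'\in S[x;\sigma]$. For $a\in S$, $\beta\in S^*$: $a^\beta=\sigma(\beta)a\beta^{-1}$; $N_s(a)=\sigma^{s-1}(a)\cdots a$, $\mathcal{D}_a^s(\beta)=\sigma^s(\beta)N_s(a)$. The linearized Reed–Solomon code $\mathcal{C}_k(\mathbf{a},\boldsymbol\beta)\subseteq S^n$ is the $S$-row span of the $k\times n$ matrix with rows $s=0,\ldots,k-1$ and columns $(i,j)$ (ordered $(1,1),\ldots,(1,n_1),\ldots,(\ell,n_\ell)$), entry $\mathcal{D}_{a_i}^s(\beta_{i,j})$. Sum-rank weight: for $\mathbf{u}\in S^s$, ${\rm rk}(\mathbf{u})$ is the number of nonzero diagonal entries of the Smith normal form over $R$ of the $m\times s$ coordinate matrix of $\mathbf{u}$ in an $R$-basis of $S$; for $\mathbf{e}=(\mathbf{e}^{(1)},\ldots,\mathbf{e}^{(\ell)})$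 with $\mathbf{e}^{(i)}\in S^{n_i}$, ${\rm wt}_{SR}(\mathbf{e})=\sum_i{\rm rk}(\mathbf{e}^{(i)})$. *)

From HB Require Import structures.
From mathcomp Require Import all_boot all_order all_algebra.
Set Implicit Arguments. Unset Strict Implicit. Unset Printing Implicit Defensive.
Import Order.TTheory GRing.Theory.
Local Open Scope ring_scope.

Definition is_ideal (T : finComUnitRingType) (I : {set T}) : Prop :=
  0 \in I /\ (forall x y, x \in I -> y \in I -> x + y \in I) /\
  (forall x, x \in I -> - x \in I) /\ (forall a x, x \in I -> a * x \in I).

Definition chain_ring (T : finComUnitRingType) : Prop :=
  forall I J : {set T}, is_ideal I -> is_ideal J -> I \subset J \/ J \subset I.

Definition maximal_ideal (T : finComUnitRingType) (M : {set T}) : Prop :=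
  is_ideal M /\ M != setT /\
  forall I : {set T}, is_ideal I -> M \subset I -> I = M \/ I = setT.

(* q = |R/m| : the number of cosets x + m *)
Definition qcard (T : finComUnitRingType) (M : {set T}) : nat :=
  #|[set [set x + y | y in M] | x : T]|.

(* irreducibility of the reduction of h modulo m, stated over R[x] *)
Definition poly_in_ideal (T : finComUnitRingType) (M : {set T}) (p : {poly T}) : Prop :=
  forall i, p`_i \in M.
(* reduction mod m is a unit of (R/m)[x], i.e. a nonzero constant *)
Definition unit_mod (T : finComUnitRingType) (M : {set T}) (f : {poly T}) : Prop :=
  f`_0 \notin M /\ forall i, (0 < i)%N -> f`_i \in M.
Definition irreducible_mod (T : finComUnitRingType) (M : {set T}) (h : {poly T}) : Prop :=
  ~ poly_in_ideal M h /\ ~ unit_mod M h /\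
  forall f g : {poly T}, poly_in_ideal M (h - f * g) -> unit_mod M f \/ unit_mod M g.

(* S = R[x]/(h): p |-> p(xi) is a surjective ring map R[x] -> S with kernel (h) *)
Definition is_quotient_by (R S : finComUnitRingType) (iota : {rmorphism R -> S})
  (h : {poly R}) (xi : S) : Prop :=
  (forall s : S, exists p : {poly R}, s = (map_poly iota p).[xi]) /\
  (forall p : {poly R}, (map_poly iota p).[xi] = 0 <-> exists g : {poly R}, p = g * h).

Definition in_mS (R S : finComUnitRingType) (iota : {rmorphism R -> S})
  (M : {set R}) (y : S) : Prop :=
  exists s : seq (R * S), all (fun p => p.1 \in M) s /\
    y = \sum_(p <- s) iota p.1 * p.2.

(* (a x^i)(b x^j) = a sigma^i(b) x^(i+j) *)
Definition skew_mul (S : finComUnitRingType) (sigma : S -> S) (P Q : {poly S}) : {poly S} :=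
  \sum_(i < size P) \sum_(j < size Q) (P`_i * iter i sigma Q`_j) *: 'X^(i + j).

(* remainder evaluation: P(b) = c  iff  P = Q'(x - b) + c for some Q' *)
Definition skew_ev (S : finComUnitRingType) (sigma : S -> S) (P : {poly S}) (b c : S) : Prop :=
  exists Q' : {poly S}, P = skew_mul sigma Q' ('X - b%:P) + c%:P.

Definition Nnorm (S : finComUnitRingType) (sigma : S -> S) (s : nat) (a : S) : S :=
  \prod_(i < s) iter (s.-1 - i) sigma a.
Definition Dop (S : finComUnitRingType) (sigma : S -> S) (a : S) (s : nat) (beta : S) : S :=
  iter s sigma beta * Nnorm sigma s a.

(* codeword c (in block form c_(i,j)) lies in C_k(a, beta): an S-combination of rows *)
Definition in_LRS (S : finComUnitRingType) (sigma : S -> S) (l : nat) (nn : 'I_l -> nat)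
  (k : nat) (a : 'I_l -> S) (beta : forall i, 'I_(nn i) -> S)
  (c : forall i, 'I_(nn i) -> S) : Prop :=
  exists u : 'I_k -> S, forall i j, c i j = \sum_(s < k) u s * Dop sigma (a i) s (beta i j).

Definition R_indep (R S : finComUnitRingType) (iota : {rmorphism R -> S}) (p : nat)
  (v : 'I_p -> S) : Prop :=
  forall r : 'I_p -> R, \sum_(j < p) iota (r j) * v j = 0 -> forall j, r j = 0.

Definition smith_rank (R : finComUnitRingType) (p s : nat) (A : 'M[R]_(p, s)) (rk : nat) : Prop :=
  exists (P : 'M[R]_p) (Q : 'M[R]_s) (dg : nat -> R),
    P \in unitmx /\ Q \in unitmx /\
    P *m A *m Q = \matrix_(i < p, j < s) (if (i : nat) == j then dg i else 0) /\
    (forall i, (i.+1 < minn p s)%N -> exists x, dg i.+1 = x * dg i) /\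
    #|[set i : 'I_(minn p s) | dg i != 0]| = rk.

(* rk(u) for u in S^s, using coordinates in the R-basis 1, xi, ..., xi^(d-1) *)
Definition rk_vec (R S : finComUnitRingType) (iota : {rmorphism R -> S}) (d : nat) (xi : S)
  (s : nat) (u : 'I_s -> S) (rk : nat) : Prop :=
  exists A : 'M[R]_(d, s),
    (forall j, u j = \sum_(i < d) iota (A i j) * xi ^+ i) /\ smith_rank A rk.

Definition wtSR_le (R S : finComUnitRingType) (iota : {rmorphism R -> S}) (d : nat) (xi : S)
  (l : nat) (nn : 'I_l -> nat) (e : forall i, 'I_(nn i) -> S) (t : nat) : Prop :=
  exists rk : 'I_l -> nat, (forall i, rk_vec iota d xi (e i) (rk i)) /\ (\sum_(i < l) rk i <= t)%N.

From HB Require Import structures.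
From mathcomp Require Import all_boot all_order all_algebra.
From mathcomp Require Import ring zify.
Set Implicit Arguments. Unset Strict Implicit. Unset Printing Implicit Defensive.
Import Order.TTheory GRing.Theory.
Local Open Scope ring_scope.

(* Operator evaluation [opev a beta P = sum_s P_s D_a^s(beta)] turns the
   remainder P(b) at b = sigma(beta) a beta^-1 into P(b) beta; it is additive
   and R-linear in beta, and opev (P Q) at beta is opev P at (opev Q at beta).
   The heart of the proof: a skew polynomial of degree < M vanishing in this
   sense on R-free families attached to the a_i, of total size >= M, is zero.
   Dividing on the right by x - b, b a conjugate of some a_i0, removes one
   element and twists the others by beta |-> sigma(beta) a_i - b beta, which
   keeps them R-free because distinct a_i are not conjugate and S is local with
   nilpotent maximal ideal pi S (h being irreducible modulo m = pi R).
   Applied to F - sum_s u_s x^s this gives deg F < k. For the error, a Smith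
   form of each block e^(i), of rank rk_i, yields n_i - rk_i R-free combinations
   of the beta_(i,j) whose combinations of e^(i) vanish; Q - L F vanishes on all
   of them, and there are at least n - t >= t + k of them. *)

Section IteratedMorphism.
Variables (S : comNzRingType) (sigma : {rmorphism S -> S}).

Lemma iter_rmorphD n : {morph iter n sigma : x y / x + y}.
Proof. by move=> x y; elim: n => //= n ->; rewrite rmorphD. Qed.

Lemma iter_rmorph0 n : iter n sigma 0 = 0.
Proof. by elim: n => //= n ->; rewrite rmorph0. Qed.

Lemma iter_rmorphN n : {morph iter n sigma : x / - x}.
Proof. by move=> x; elim: n => //= n ->; rewrite rmorphN. Qed.

Lemma iter_rmorphM n : {morph iter n sigma : x y / x * y}.
Proof. by move=> x y; elim: n => //= n ->; rewrite rmorphM. Qed.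

Lemma iter_rmorph1 n : iter n sigma 1 = 1.
Proof. by elim: n => //= n ->; rewrite rmorph1. Qed.

Lemma iter_rmorph_sum n I (r : seq I) (P : pred I) (F : I -> S) :
  iter n sigma (\sum_(i <- r | P i) F i) = \sum_(i <- r | P i) iter n sigma (F i).
Proof. exact: (big_morph _ (iter_rmorphD n) (iter_rmorph0 n)). Qed.

Lemma iter_fixed n x : sigma x = x -> iter n sigma x = x.
Proof. by move=> sx; elim: n => //= n ->. Qed.

End IteratedMorphism.

Lemma big_coef_wide (R : nzSemiRingType) (V : nmodType) (F : nat -> R -> V)
    (p : {poly R}) n :
  (forall i, F i 0 = 0) -> (size p <= n)%N ->
  \sum_(i < size p) F i p`_i = \sum_(i < n) F i p`_i.
Proof.
move=> F0 hn; rewrite (big_ord_widen n (fun i => F i p`_i) hn) big_mkcond /=.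
by apply: eq_bigr => i _; case: ltnP => // hi; rewrite nth_default.
Qed.

Section OperatorEvaluation.
Variables (S : finComUnitRingType) (sigma : {rmorphism S -> S}).
Implicit Types (a b beta c : S) (P Q : {poly S}).

Lemma Nnorm0 a : Nnorm sigma 0 a = 1.
Proof. by rewrite /Nnorm big_ord0. Qed.

Lemma NnormS a s : Nnorm sigma s.+1 a = iter s sigma a * Nnorm sigma s a.
Proof.
rewrite /Nnorm big_ord_recl subn0 /=; congr (_ * _).
by apply: eq_bigr => i _; rewrite /bump leq0n add1n; congr iter; lia.
Qed.

Lemma NnormD a i j :
  Nnorm sigma (i + j) a = iter i sigma (Nnorm sigma j a) * Nnorm sigma i a.
Proof.
elim: j => [|j IH]; first by rewrite addn0 Nnorm0 iter_rmorph1 mul1r.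
by rewrite addnS !NnormS IH iter_rmorphM -iterD mulrA.
Qed.

Lemma DopD a beta i j :
  Dop sigma a (i + j) beta = iter i sigma (Dop sigma a j beta) * Nnorm sigma i a.
Proof. by rewrite /Dop NnormD iter_rmorphM -iterD addnC mulrA. Qed.

Definition opev a beta P : S := \sum_(i < size P) P`_i * Dop sigma a i beta.

Lemma opev_wide a beta P n : (size P <= n)%N ->
  opev a beta P = \sum_(i < n) P`_i * Dop sigma a i beta.
Proof.
move=> hn; rewrite /opev (@big_coef_wide _ _ (fun i x => x * Dop sigma a i beta) _ n) //.
by move=> i; rewrite mul0r.
Qed.

Lemma opevZ a beta c P : opev a beta (c *: P) = c * opev a beta P.
Proof.
rewrite (@opev_wide _ _ (c *: P) (size P)) ?size_scale_leq // /opev mulr_sumr.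
by apply: eq_bigr => i _; rewrite coefZ /Dop; ring.
Qed.

Lemma opevD a beta P Q : opev a beta (P + Q) = opev a beta P + opev a beta Q.
Proof.
pose n := maxn (size P) (size Q).
rewrite (@opev_wide _ _ (P + Q) n) ?(leq_trans (size_polyD _ _)) //.
rewrite (@opev_wide _ _ P n) ?leq_maxl // (@opev_wide _ _ Q n) ?leq_maxr //.
by rewrite -big_split; apply: eq_bigr => i _; rewrite coefD mulrDl.
Qed.

HB.instance Definition _ a beta :=
  GRing.isSemilinear.Build S {poly S} S _ (opev a beta) (opevZ a beta, opevD a beta).

Lemma opevZXn a beta c n : opev a beta (c *: 'X^n) = c * Dop sigma a n beta.
Proof.
rewrite opevZ (@opev_wide _ _ _ n.+1) ?size_polyXn // big_ord_recr /= big1 ?add0r.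
  by rewrite coefXn eqxx mul1r.
by move=> i _; rewrite coefXn (ltn_eqF (ltn_ord i)) mul0r.
Qed.

Lemma opevC a beta c : opev a beta c%:P = c * beta.
Proof. by rewrite -alg_polyC -(expr0 'X) opevZXn /Dop Nnorm0 mulr1. Qed.

Lemma opev_skew_mul a beta P Q :
  opev a beta (skew_mul sigma P Q) = opev a (opev a beta Q) P.
Proof.
rewrite /skew_mul raddf_sum /= [RHS]/opev; apply: eq_bigr => i _.
rewrite raddf_sum /= [in RHS]/Dop [in RHS]/opev iter_rmorph_sum mulr_suml mulr_sumr.
apply: eq_bigr => j _.
by rewrite opevZXn DopD /Dop !iter_rmorphM; ring.
Qed.

Lemma opevD_beta a b1 b2 P : opev a (b1 + b2) P = opev a b1 P + opev a b2 P.
Proof.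
by rewrite /opev -big_split; apply: eq_bigr => i _; rewrite /Dop iter_rmorphD mulrDl mulrDr.
Qed.

Lemma opev0_beta a P : opev a 0 P = 0.
Proof. by rewrite /opev big1 // => i _; rewrite /Dop iter_rmorph0 mul0r mulr0. Qed.

Lemma opev_sum_beta a P I (r : seq I) (Pr : pred I) (F : I -> S) :
  opev a (\sum_(i <- r | Pr i) F i) P = \sum_(i <- r | Pr i) opev a (F i) P.
Proof. exact: (big_morph _ (fun x y => opevD_beta a x y P) (opev0_beta a P)). Qed.

Lemma opevM_fixed_beta a x beta P :
  sigma x = x -> opev a (x * beta) P = x * opev a beta P.
Proof.
move=> sx; rewrite /opev mulr_sumr; apply: eq_bigr => i _.
by rewrite /Dop iter_rmorphM iter_fixed //; ring.
Qed.

Lemma opev_XsubC a beta b : opev a beta ('X - b%:P) = sigma beta * a - b * beta.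
Proof.
by rewrite raddfB /= opevC -['X]scale1r -(expr1 'X) opevZXn /Dop NnormS Nnorm0 /=; ring.
Qed.

(* Operator evaluation at beta kills x - b, so only the remainder survives. *)
Lemma opev_skew_ev a beta c P : beta \is a GRing.unit ->
  skew_ev sigma P (sigma beta * a * beta^-1) c -> opev a beta P = c * beta.
Proof.
move=> bu [Q' ->]; rewrite raddfD /= opev_skew_mul opev_XsubC opevC.
by rewrite -mulrA mulVr // mulr1 subrr opev0_beta add0r.
Qed.

End OperatorEvaluation.

Section SkewDivision.
Variables (S : finComUnitRingType) (sigma : {rmorphism S -> S}).
Implicit Types (b c : S) (P Q G : {poly S}).

Lemma skew_mul_wide P Q n : (size P <= n)%N ->
  skew_mul sigma P Q =
  \sum_(i < n) P`_i *: \sum_(j < size Q) iter i sigma Q`_j *: 'X^(i + j).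
Proof.
move=> hn; pose T i := \sum_(j < size Q) iter i sigma Q`_j *: 'X^(i + j).
rewrite /skew_mul -(@big_coef_wide _ _ (fun i x => x *: T i) _ n _ hn); last first.
  by move=> i; rewrite scale0r.
by apply: eq_bigr => i _; rewrite scaler_sumr; apply: eq_bigr => j _; rewrite scalerA.
Qed.

Lemma skew_mul0l Q : skew_mul sigma 0 Q = 0.
Proof. by rewrite /skew_mul size_poly0 big_ord0. Qed.

Lemma skew_mulDl P1 P2 Q :
  skew_mul sigma (P1 + P2) Q = skew_mul sigma P1 Q + skew_mul sigma P2 Q.
Proof.
pose n := maxn (size P1) (size P2).
rewrite (@skew_mul_wide (P1 + P2) Q n) ?(leq_trans (size_polyD _ _)) //.
rewrite (@skew_mul_wide P1 Q n) ?leq_maxl // (@skew_mul_wide P2 Q n) ?leq_maxr //.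
by rewrite -big_split; apply: eq_bigr => i _; rewrite coefD scalerDl.
Qed.

Lemma skew_mulZl c P Q : skew_mul sigma (c *: P) Q = c *: skew_mul sigma P Q.
Proof.
rewrite (@skew_mul_wide (c *: P) Q (size P)) ?size_scale_leq //.
rewrite (@skew_mul_wide P Q (size P)) // scaler_sumr.
by apply: eq_bigr => i _; rewrite coefZ scalerA.
Qed.

Lemma skew_mul_suml I (r : seq I) (Pr : pred I) (F : I -> {poly S}) Q :
  skew_mul sigma (\sum_(i <- r | Pr i) F i) Q = \sum_(i <- r | Pr i) skew_mul sigma (F i) Q.
Proof. exact: (big_morph _ (fun x y => skew_mulDl x y Q) (skew_mul0l Q)). Qed.

Lemma size_skew_mul P Q : (size (skew_mul sigma P Q) <= (size P + size Q).-1)%N.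
Proof.
rewrite /skew_mul (leq_trans (size_sum _ _ _)) //; apply/bigmax_leqP => i _.
rewrite (leq_trans (size_sum _ _ _)) //; apply/bigmax_leqP => j _.
rewrite (leq_trans (size_scale_leq _ _)) // size_polyXn.
by have := ltn_ord i; have := ltn_ord j; lia.
Qed.

Lemma skew_mulXn_XsubC b s :
  skew_mul sigma 'X^s ('X - b%:P) = 'X^(s.+1) - iter s sigma b *: 'X^s.
Proof.
rewrite /skew_mul size_polyXn big_ord_recr /= big1 ?add0r; last first.
  by move=> i _; rewrite big1 // => j _; rewrite coefXn (ltn_eqF (ltn_ord i)) mul0r scale0r.
rewrite size_XsubC !big_ord_recr big_ord0 /= add0r coefXn eqxx !mul1r.
rewrite !coefB !coefX !coefC /= subr0 sub0r iter_rmorph1 scale1r iter_rmorphN scaleNr.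
by rewrite addn0 addn1 addrC.
Qed.

Fixpoint quoXn b s : {poly S} :=
  if s is s'.+1 then 'X^s' + iter s' sigma b *: quoXn b s' else 0.

Lemma size_quoXn b s : (size (quoXn b s) <= s)%N.
Proof.
elim: s => [|s IH] /=; first by rewrite size_poly0.
rewrite (leq_trans (size_polyD _ _)) // geq_max size_polyXn leqnn /=.
by rewrite (leq_trans (size_scale_leq _ _)) // (leq_trans IH).
Qed.

Lemma Xn_divXsubC b s :
  'X^s = skew_mul sigma (quoXn b s) ('X - b%:P) + (Nnorm sigma s b)%:P.
Proof.
elim: s => [|s IH] /=; first by rewrite skew_mul0l add0r Nnorm0 expr0.
rewrite skew_mulDl skew_mulZl skew_mulXn_XsubC NnormS -scale_polyC.
have -> : skew_mul sigma (quoXn b s) ('X - b%:P) = 'X^s - (Nnorm sigma s b)%:P.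
  by rewrite [in RHS]IH addrK.
by rewrite scalerBr addrA subrK addrNK.
Qed.

Definition skew_quo b G : {poly S} := \sum_(i < size G) G`_i *: quoXn b i.
Definition skew_rem b G : S := \sum_(i < size G) G`_i * Nnorm sigma i b.

Lemma size_skew_quo b G : (size (skew_quo b G) <= (size G).-1)%N.
Proof.
rewrite /skew_quo (leq_trans (size_sum _ _ _)) //; apply/bigmax_leqP => i _.
rewrite (leq_trans (size_scale_leq _ _)) // (leq_trans (size_quoXn _ _)) //.
by case: i => i /= hi; rewrite -ltnS prednK // (leq_ltn_trans _ hi).
Qed.

Lemma skew_divXsubC b G :
  G = skew_mul sigma (skew_quo b G) ('X - b%:P) + (skew_rem b G)%:P.
Proof.
rewrite /skew_quo /skew_rem skew_mul_suml rmorph_sum -big_split /=.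
rewrite -{1}[G]coefK poly_def; apply: eq_bigr => i _.
by rewrite skew_mulZl -scale_polyC -scalerDr -Xn_divXsubC.
Qed.

End SkewDivision.

Section Ideals.
Variables (R : finComUnitRingType) (I : {set R}).
Hypothesis idI : is_ideal I.

Lemma ideal0 : 0 \in I. Proof. by case: idI. Qed.

Lemma idealD x y : x \in I -> y \in I -> x + y \in I.
Proof. by move=> Ix Iy; case: idI => _ [addI _]; apply: addI. Qed.

Lemma idealMl a x : x \in I -> a * x \in I.
Proof. by move=> Ix; case: idI => _ [_ [_ mulI]]; apply: mulI. Qed.

Lemma idealMr a x : x \in I -> x * a \in I.
Proof. by rewrite mulrC; apply: idealMl. Qed.

Lemma ideal_sum (J : Type) (r : seq J) (P : pred J) (F : J -> R) :
  (forall j, P j -> F j \in I) -> \sum_(j <- r | P j) F j \in I.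
Proof.
by move=> FI; apply: (big_ind (fun x => x \in I)) => //; [exact: ideal0 | exact: idealD].
Qed.

Lemma poly_in_idealD p q :
  poly_in_ideal I p -> poly_in_ideal I q -> poly_in_ideal I (p + q).
Proof. by move=> Ip Iq i; rewrite coefD idealD. Qed.

Lemma poly_in_idealMr p q : poly_in_ideal I p -> poly_in_ideal I (p * q).
Proof. by move=> Ip i; rewrite coefM; apply: ideal_sum => j _; apply: idealMr. Qed.

End Ideals.

Definition principal_ideal (R : finComUnitRingType) (x : R) : {set R} := [set x * y | y : R].

Lemma principal_ideal_is_ideal (R : finComUnitRingType) (x : R) : is_ideal (principal_ideal x).
Proof.
split; first by apply/imsetP; exists 0; rewrite ?mulr0.
split.
  move=> ? ? /imsetP[y1 _ ->] /imsetP[y2 _ ->].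
  by apply/imsetP; exists (y1 + y2); rewrite ?mulrDr.
split; first by move=> ? /imsetP[y1 _ ->]; apply/imsetP; exists (- y1); rewrite ?mulrN.
by move=> a ? /imsetP[y1 _ ->]; apply/imsetP; exists (a * y1); rewrite // mulrCA.
Qed.

Lemma principal_ideal_id (R : finComUnitRingType) (x : R) : x \in principal_ideal x.
Proof. by apply/imsetP; exists 1; rewrite ?mulr1. Qed.

Section FiniteChainRing.
Variables (R : finComUnitRingType) (mR : {set R}).
Hypotheses (chainR : chain_ring R) (maxmR : maximal_ideal mR).

Let idmR : is_ideal mR. Proof. by case: maxmR. Qed.

Lemma maximal_ideal_1 : 1 \notin mR.
Proof.
apply/negP => mR1; case: maxmR => _ [/negP []].
by apply/eqP/setP => x; rewrite inE -(mulr1 x) idealMl.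
Qed.

Lemma notin_maximal_unit x : x \notin mR -> x \is a GRing.unit.
Proof.
move=> xm; have [sxm|smx] := chainR (principal_ideal_is_ideal x) idmR.
  by rewrite (subsetP sxm _ (principal_ideal_id x)) in xm.
case: maxmR => _ [_ /(_ _ (principal_ideal_is_ideal x) smx)] [ex|ex].
  by rewrite -ex principal_ideal_id in xm.
have : 1 \in principal_ideal x by rewrite ex inE.
by case/imsetP => y _ xy1; apply/unitrPr; exists y.
Qed.

(* A generator is an element of mR whose principal ideal is largest. *)
Lemma maximal_ideal_principal :
  exists2 pi, pi \in mR & forall x, x \in mR -> exists r, x = pi * r.
Proof.
have [pi mpi maxpi] := @arg_maxnP R 0 (mem mR) (fun p => #|principal_ideal p|) (ideal0 idmR).
exists pi => // x mx.
have [sxpi|spix] := chainR (principal_ideal_is_ideal x) (principal_ideal_is_ideal pi).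
  by case/imsetP: (subsetP sxpi _ (principal_ideal_id x)) => r _ ->; exists r.
have /eqP expi : principal_ideal pi == principal_ideal x by rewrite eqEcard spix; exact: maxpi.
have : x \in principal_ideal pi by rewrite expi principal_ideal_id.
by case/imsetP => r _ ->; exists r.
Qed.

(* Two of the #|R|.+1 powers pi^i coincide, pi^i = pi^j with i < j, and
   then 1 - pi^(j-i) is a unit. *)
Lemma maximal_ideal_nilpotent pi : pi \in mR -> exists e, pi ^+ e = 0.
Proof.
move=> mpi.
have [/existsP[i /existsP[j /andP[ltij /eqP eqij]]] | /existsPn noeq] :=
  boolP [exists i : 'I_#|R|.+1, exists j : 'I_#|R|.+1, (i < j)%N && (pi ^+ i == pi ^+ j)].
  exists i; have ji_gt0 : (0 < j - i)%N by rewrite subn_gt0.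
  have u : 1 - pi ^+ (j - i) \is a GRing.unit.
    apply: notin_maximal_unit; apply: contra maximal_ideal_1 => m1.
    rewrite -(subrK (pi ^+ (j - i)) 1) idealD //.
    by rewrite -(prednK ji_gt0) exprS idealMr.
  apply: (mulIr u); rewrite mul0r mulrBr mulr1 -exprD subnKC ?(ltnW ltij) //.
  by rewrite eqij subrr.
have inj : injective (fun i : 'I_#|R|.+1 => pi ^+ i).
  move=> i j eqij; apply: val_inj => /=.
  by case: (ltngtP i j) => // [ltij | ltji];
    [move: (noeq i) | move: (noeq j)] => /existsPn; [move/(_ j) | move/(_ i)];
    rewrite ?ltij ?ltji eqij eqxx.
by move: (leq_card _ inj); rewrite card_ord ltnn.
Qed.

End FiniteChainRing.

Section LocalQuotient.
Variables (R S : finComUnitRingType) (mR : {set R}) (iota : {rmorphism R -> S}).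
Variables (h : {poly R}) (xi : S) (pi : R) (e : nat).
Hypotheses (chainR : chain_ring R) (maxmR : maximal_ideal mR).
Hypotheses (mR_pi : forall x, x \in mR -> exists r, x = pi * r) (pi_nilp : pi ^+ e = 0).
Hypotheses (monic_h : h \is monic) (irr_h : irreducible_mod mR h).
Hypothesis (quoS : is_quotient_by iota h xi).

Let idmR : is_ideal mR. Proof. by case: maxmR. Qed.

Definition evq (p : {poly R}) : S := (map_poly iota p).[xi].
HB.instance Definition _ := GRing.RMorphism.copy evq (horner_eval xi \o map_poly iota).

Lemma evqC c : evq c%:P = iota c.
Proof. by rewrite /evq map_polyC hornerC. Qed.

Lemma evq_h : evq h = 0.
Proof. by case: quoS => _ /(_ h) [_]; apply; exists 1; rewrite mul1r. Qed.

Definition in_piS (y : S) := exists z, y = iota pi * z.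

Lemma in_piSD x y : in_piS x -> in_piS y -> in_piS (x + y).
Proof. by move=> [a ->] [b ->]; exists (a + b); rewrite mulrDr. Qed.

Lemma in_piSMl a x : in_piS x -> in_piS (a * x).
Proof. by move=> [b ->]; exists (a * b); rewrite mulrCA. Qed.

Lemma evq_poly_in_ideal p : poly_in_ideal mR p -> in_piS (evq p).
Proof.
move=> mRp; rewrite /evq horner_coef.
apply: (big_ind in_piS); [by exists 0; rewrite mulr0 | exact: in_piSD | move=> i _].
have [r pir] := mR_pi (mRp i).
by exists (iota r * xi ^+ i); rewrite coef_map /= pir rmorphM mulrA.
Qed.

(* Geometric series: pi z is nilpotent. *)
Lemma unit_1_sub_in_piS w : in_piS w -> (1 - w) \is a GRing.unit.
Proof.
move=> [z ->]; apply/unitrPr; exists (\sum_(i < e) (iota pi * z) ^+ i).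
have := subrX1 (iota pi * z) e; rewrite exprMn -rmorphXn pi_nilp rmorph0 mul0r sub0r.
by move=> E; rewrite -opprB mulNr -E opprK.
Qed.

Lemma monic_factor_in_piS (g q : {poly R}) : g \is monic -> (1 < size g)%N ->
  poly_in_ideal mR (h - q * g) -> in_piS (evq g).
Proof.
move=> monic_g g_gt1 hqg; case: irr_h => _ [_ /(_ q g hqg)] [] [q0 mR_q]; last first.
  have := mR_q (size g).-1; rewrite -lead_coefE (monicP monic_g) -ltnS prednK ?(ltnW g_gt1) //.
  by move=> /(_ g_gt1); rewrite (negbTE (maximal_ideal_1 maxmR)).
have u0 : q`_0 \is a GRing.unit := notin_maximal_unit chainR maxmR q0.
have mR_hq0 : poly_in_ideal mR (h - (q`_0)%:P * g).
  have -> : h - (q`_0)%:P * g = (h - q * g) + (q - (q`_0)%:P) * g by ring.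
  apply: poly_in_idealD hqg _ => //; apply: poly_in_idealMr => // -[|i].
    by rewrite coefB coefC subrr ideal0.
  by rewrite coefB coefC subr0; apply: mR_q.
have [z] := evq_poly_in_ideal mR_hq0.
rewrite rmorphB rmorphM /= evq_h evqC sub0r => hz.
exists (- iota (q`_0)^-1 * z).
by rewrite mulrCA mulNr -mulrN -hz opprK mulrA -rmorphM mulVr // rmorph1 mul1r.
Qed.

Section Ideal_y_pi.
Variables (y : S) (p : {poly R}).
Hypotheses (y_evq : y = evq p) (y_nonunit : y \isn't a GRing.unit).

Definition in_ideal_y_pi (f : {poly R}) := exists s z, evq f = y * s + iota pi * z.

Lemma in_ideal_y_piB f g :
  in_ideal_y_pi f -> in_ideal_y_pi g -> in_ideal_y_pi (f - g).
Proof.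
by move=> [s1 [z1 e1]] [s2 [z2 e2]]; exists (s1 - s2), (z1 - z2); rewrite rmorphB /= e1 e2; ring.
Qed.

Lemma in_ideal_y_piMl q f : in_ideal_y_pi f -> in_ideal_y_pi (q * f).
Proof. by move=> [s [z ef]]; exists (evq q * s), (evq q * z); rewrite rmorphM /= ef; ring. Qed.

Lemma in_ideal_y_pi_poly_in_ideal f : poly_in_ideal mR f -> in_ideal_y_pi f.
Proof. by move=> /evq_poly_in_ideal [z ef]; exists 0, z; rewrite ef; ring. Qed.

Lemma in_ideal_y_pi_rmodp g f : g \is monic ->
  in_ideal_y_pi f -> in_ideal_y_pi g -> in_ideal_y_pi (Pdiv.Ring.rmodp f g).
Proof.
move=> monic_g If Ig.
have -> : Pdiv.Ring.rmodp f g = f - Pdiv.Ring.rdivp f g * g.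
  by rewrite {2}(Pdiv.RingMonic.rdivp_eq monic_g f) addrC addKr.
by apply: in_ideal_y_piB => //; apply: in_ideal_y_piMl.
Qed.

Lemma in_ideal_y_pi1 : ~ in_ideal_y_pi 1.
Proof.
move=> [s [z]]; rewrite rmorph1 => E; move/negP: y_nonunit; apply.
have ys : y * s = 1 - iota pi * z by rewrite E addrK.
have : y * s \is a GRing.unit by rewrite ys; apply: unit_1_sub_in_piS; exists z.
by rewrite unitrM => /andP[].
Qed.

(* Scale the top coefficient outside mR to 1 and drop the ones above it. *)
Lemma in_ideal_y_pi_reduce r d : in_ideal_y_pi r -> (size r <= d)%N ->
  poly_in_ideal mR r \/ exists g, [/\ g \is monic, in_ideal_y_pi g & (size g <= d)%N].
Proof.
move=> Ir sr; have [mRr|] := boolP [forall i : 'I_(size r), r`_i \in mR].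
  left => i; case: (ltnP i (size r)) => hi; first by move/forallP: mRr => /(_ (Ordinal hi)).
  by rewrite nth_default // ideal0.
rewrite negb_forall => /existsP[i0 ri0]; right.
have bnd j : r`_j \notin mR -> (j < size r)%N.
  by apply: contraR; rewrite -leqNgt => /(nth_default 0) ->; rewrite ideal0.
have [j rj maxj] := @ex_maxnP (fun j => r`_j \notin mR) (size r) (ex_intro _ (val i0) ri0)
  (fun j rj => ltnW (bnd j rj)).
have uj : r`_j \is a GRing.unit := notin_maximal_unit chainR maxmR rj.
pose g := \poly_(i < j.+1) ((r`_j)^-1 * r`_i).
have size_g : size g = j.+1 by rewrite size_poly_eq //= mulVr // oner_neq0.
exists g; split; last by rewrite size_g (leq_trans (bnd j rj) sr).
  by rewrite monicE lead_coefE size_g /= coef_poly ltnSn mulVr.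
pose t := r - \poly_(i < j.+1) r`_i.
have mRt : poly_in_ideal mR t.
  move=> k; rewrite /t coefB coef_poly; case: ltnP => hk; first by rewrite subrr ideal0.
  by rewrite subr0; apply: contraLR hk => /maxj; rewrite -leqNgt.
have -> : g = (r`_j)^-1%:P * (r - t).
  apply/polyP => k; rewrite /t opprB addrC subrK coefCM !coef_poly.
  by case: ifP; rewrite ?mulr0.
by apply: in_ideal_y_piMl; apply: in_ideal_y_piB => //; exact: in_ideal_y_pi_poly_in_ideal.
Qed.

(* Induction on the size of a monic polynomial g in (y, pi): dividing h and
   then p by g either yields a smaller such g, or gives pi | g(xi) and then pi | y. *)
Lemma in_piS_of_monic_in_ideal n (g : {poly R}) : size g = n.+1 -> g \is monic ->
  in_ideal_y_pi g -> in_piS y.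
Proof.
elim/ltn_ind: n g => n IH g size_g monic_g Ig.
have IH' (g' : {poly R}) : g' \is monic -> in_ideal_y_pi g' -> (size g' <= n)%N -> in_piS y.
  move=> monic_g' Ig'; case E: (size g') (monic_neq0 monic_g') => [|m].
    by rewrite -size_poly_eq0 E.
  by move=> _ lt_mn; apply: (IH m _ g').
have size_rmod f : (size (Pdiv.Ring.rmodp f g) <= n)%N.
  by rewrite -ltnS -size_g Pdiv.Ring.ltn_rmodpN0 // monic_neq0.
have Ih : in_ideal_y_pi h by exists 0, 0; rewrite evq_h; ring.
have Ip : in_ideal_y_pi p by exists 1, 0; rewrite -y_evq; ring.
have [mRrh | [g' [? ? ?]]] :=
  in_ideal_y_pi_reduce (in_ideal_y_pi_rmodp monic_g Ih Ig) (size_rmod h);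
  last exact: (IH' g').
have g_gt1 : (1 < size g)%N.
  rewrite size_g ltnS lt0n; apply: contraPneq in_ideal_y_pi1 => n0.
  move: size_g; rewrite n0 => /eqP/size_poly1P [c _ gc].
  by move: Ig (monicP monic_g); rewrite gc lead_coefC => Ic c1; rewrite c1 polyC1 in Ic.
have /monic_factor_in_piS pig : poly_in_ideal mR (h - Pdiv.Ring.rdivp h g * g).
  by rewrite {1}(Pdiv.RingMonic.rdivp_eq monic_g h) addrC addKr.
have [mRrp | [g' [? ? ?]]] :=
  in_ideal_y_pi_reduce (in_ideal_y_pi_rmodp monic_g Ip Ig) (size_rmod p);
  last exact: (IH' g').
rewrite y_evq (Pdiv.RingMonic.rdivp_eq monic_g p) rmorphD rmorphM /=.
by apply: in_piSD; [apply: in_piSMl; apply: pig | apply: evq_poly_in_ideal].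
Qed.

End Ideal_y_pi.

Lemma nonunit_in_piS y : y \isn't a GRing.unit -> in_piS y.
Proof.
have [p ->] := quoS.1 y => nu.
have size_h : size h = (size h).-1.+1 by rewrite prednK // size_poly_gt0 monic_neq0.
by apply: (in_piS_of_monic_in_ideal erefl nu size_h monic_h); exists 0, 0; rewrite evq_h; ring.
Qed.

End LocalQuotient.

Section FamilySeq.
Variables (S : nmodType) (p : nat) (v : 'I_p -> S).

Definition seq_of_fam : seq S := mkseq (fun j => if insub j is Some jj then v jj else 0) p.

Lemma size_seq_of_fam : size seq_of_fam = p.
Proof. exact: size_mkseq. Qed.

Lemma nth_seq_of_fam (j : 'I_p) : seq_of_fam`_j = v j.
Proof. by rewrite nth_mkseq // valK. Qed.

Lemma seq_of_famP x : x \in seq_of_fam -> exists j, x = v j.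
Proof.
case/mapP => j; rewrite mem_iota add0n => /andP[_ ltjp] ->.
by exists (Ordinal ltjp); rewrite (@insubT _ (fun i => i < p)%N 'I_p j ltjp).
Qed.

End FamilySeq.

Section Vanishing.
Variables (R S : finComUnitRingType) (iota : {rmorphism R -> S}) (sigma : {rmorphism S -> S}).
Variables (pi : R) (e : nat) (l : nat) (a : 'I_l -> S).
Hypothesis pi_nilp : pi ^+ e = 0.
Hypothesis sigma_fixed : forall y : S, sigma y = y <-> exists r : R, y = iota r.
Hypothesis nonunit_pi : forall y : S, y \isn't a GRing.unit -> in_piS iota pi y.
Hypothesis a_unit : forall i, a i \is a GRing.unit.
Hypothesis a_sep : forall i j, i != j -> forall d : S, d \is a GRing.unit ->
  a i - sigma d * a j * d^-1 \is a GRing.unit.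

Lemma sigma_iota r : sigma (iota r) = iota r.
Proof. by apply/sigma_fixed; exists r. Qed.

(* If pi^e0 is the first vanishing power, pi^(e0-1) kills every multiple of pi. *)
Lemma unit_of_R_torsionfree y : (forall r, iota r * y = 0 -> r = 0) -> y \is a GRing.unit.
Proof.
move=> tf; apply/negPn/negP => /nonunit_pi [z yz].
have [e0 /eqP pie0 mine0] := ex_minnP (ex_intro (fun n => pi ^+ n == 0) e (introT eqP pi_nilp)).
have e0_gt0 : (0 < e0)%N by case: e0 pie0 {mine0} => // /eqP; rewrite expr0 oner_eq0.
have : pi ^+ e0.-1 == 0.
  by apply/eqP/tf; rewrite yz mulrA -rmorphM -exprSr prednK // pie0 rmorph0 mul0r.
by move/mine0; rewrite -ltnS prednK // ltnn.
Qed.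

Definition R_free (s : seq S) := forall rr : nat -> R,
  \sum_(j < size s) iota (rr j) * s`_j = 0 -> forall j, (j < size s)%N -> rr j = 0.

Lemma R_free_head_unit x s : R_free (x :: s) -> x \is a GRing.unit.
Proof.
move=> free_xs; apply: unit_of_R_torsionfree => r rx0.
apply: (free_xs (fun j => if j == 0%N then r else 0) _ 0%N) => //.
by rewrite big_ord_recl /= big1 ?addr0 // => i _; rewrite rmorph0 mul0r.
Qed.

Lemma pi_power_unit_decomposition b : b != 0 ->
  exists v u, u \is a GRing.unit /\ b = iota pi ^+ v * u.
Proof.
move=> b0; pose P v := [exists u : S, b == iota pi ^+ v * u].
have P0 : P 0%N by apply/existsP; exists b; rewrite expr0 mul1r.
have boundP v : P v -> (v <= e)%N.
  move=> /existsP[u /eqP bu]; rewrite leqNgt; apply: contra b0 => lt_ev.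
  by rewrite bu -(subnKC (ltnW lt_ev)) exprD -rmorphXn pi_nilp rmorph0 !mul0r.
have [v /existsP[u /eqP bu] maxv] := ex_maxnP (ex_intro P 0%N P0) boundP.
exists v, u; split => //; apply/negPn/negP => /nonunit_pi [z uz].
have : P v.+1 by apply/existsP; exists z; rewrite bu uz mulrA -exprSr.
by move/maxv; rewrite ltnn.
Qed.

Definition twist (ai b beta : S) := sigma beta * ai - b * beta.

(* A root of twist would make a_i and a_i0 conjugate by a unit, up to the unit
   part of beta, contradicting a_sep. *)
Lemma twist_inj i i0 g beta : i != i0 -> g \is a GRing.unit ->
  twist (a i) (sigma g * a i0 * g^-1) beta = 0 -> beta = 0.
Proof.
move=> ii0 gu; rewrite /twist => tw0; apply/eqP/negP => /negP beta0.
have [v [u [uu betavu]]] := pi_power_unit_decomposition beta0.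
set b := sigma g * a i0 * g^-1 in tw0.
have su : sigma u \is a GRing.unit by rewrite rmorph_unit.
have du : u^-1 * g \is a GRing.unit by rewrite unitrM unitrV uu.
have sep : sigma u * a i - b * u \is a GRing.unit.
  have -> : sigma u * a i - b * u =
      sigma u * (a i - sigma (u^-1 * g) * a i0 * (u^-1 * g)^-1).
    by rewrite rmorphM rmorphV // invrM ?unitrV // invrK /b mulrBr !mulrA mulrV // mul1r.
  by rewrite unitrM su a_sep.
have : iota pi ^+ v * (sigma u * a i - b * u) = 0.
  by rewrite -tw0 betavu rmorphM rmorphXn sigma_iota; ring.
move/(congr1 (fun z => z * (sigma u * a i - b * u)^-1)).
rewrite mul0r -mulrA mulrV // mulr1 => piv0.
by move: beta0; rewrite betavu piv0 mul0r eqxx.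
Qed.

Lemma twist_R_comb ai b (s : seq S) (rr : nat -> R) :
  twist ai b (\sum_(j < size s) iota (rr j) * s`_j) =
  \sum_(j < size s) iota (rr j) * twist ai b s`_j.
Proof.
rewrite /twist rmorph_sum mulr_suml mulr_sumr -sumrB.
by apply: eq_bigr => j _; rewrite rmorphM sigma_iota; ring.
Qed.

Lemma R_free_map_twist ai b s : R_free s ->
  (forall beta, twist ai b beta = 0 -> beta = 0) -> R_free (map (twist ai b) s).
Proof.
move=> free_s inj rr; rewrite size_map => sum0; apply: free_s; apply: inj.
by rewrite twist_R_comb -[RHS]sum0; apply: eq_bigr => j _; rewrite (nth_map 0).
Qed.

(* If the twisted combination beta vanishes, beta g^-1 is fixed by sigma,
   hence equals some iota r0, giving a relation with g. *)
Lemma R_free_behead_twist ai g s : R_free (g :: s) -> ai \is a GRing.unit ->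
  R_free (map (twist ai (sigma g * ai * g^-1)) s).
Proof.
move=> free_gs au rr; rewrite size_map => sum0.
have gu : g \is a GRing.unit := R_free_head_unit free_gs.
have sgu : sigma g \is a GRing.unit by rewrite rmorph_unit.
set beta := \sum_(j < size s) iota (rr j) * s`_j.
have : twist ai (sigma g * ai * g^-1) beta = 0.
  by rewrite twist_R_comb -[RHS]sum0; apply: eq_bigr => j _; rewrite (nth_map 0).
move=> /subr0_eq tw0.
have : sigma (beta * g^-1) = beta * g^-1.
  rewrite rmorphM rmorphV // -[sigma beta](mulrK au) tw0.
  rewrite (_ : _ / sigma g = sigma g / sigma g * (ai / ai) * (beta / g)); last by ring.
  by rewrite !mulrV // !mul1r.
case/sigma_fixed => r0 r0E.
have betaE : beta = iota r0 * g by rewrite -r0E -mulrA mulVr // mulr1.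
move=> j ltj; apply: (free_gs (fun k => if k is k'.+1 then rr k' else - r0) _ j.+1) => //.
by rewrite big_ord_recl /= rmorphN -/beta betaE mulNr addNr.
Qed.

(* Divide G on the right by x - b, b the conjugate of a_i0 by the first
   element g0 of its family: vanishing at g0 kills the remainder, and the
   quotient vanishes on the twisted families, which stay R-free and have one
   element fewer in total. *)
Lemma skew_poly_eq0_of_vanishing M (G : {poly S}) (fam : 'I_l -> seq S) :
  (size G <= M)%N -> (M <= \sum_(i < l) size (fam i))%N -> (forall i, R_free (fam i)) ->
  (forall i x, x \in fam i -> opev sigma (a i) x G = 0) -> G = 0.
Proof.
elim: M G fam => [|M IH] G fam sG sfam free_fam vanish.
  by apply/eqP; rewrite -size_poly_eq0 -leqn0.
have [i0 fam_i0 | fam0] := pickP (fun i => (0 < size (fam i))%N); last first.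
  by move: sfam; rewrite big1 // => i _; move: (fam0 i) => /=; case: (fam i).
case E0: (fam i0) fam_i0 => [|g0 s0] // _.
have g0u : g0 \is a GRing.unit by apply: (@R_free_head_unit g0 s0); rewrite -E0.
set b := sigma g0 * a i0 * g0^-1.
have divG := skew_divXsubC sigma b G.
set G' := skew_quo sigma b G in divG *; set c := skew_rem sigma b G in divG.
have opevG i x : opev sigma (a i) x G = opev sigma (a i) (twist (a i) b x) G' + c * x.
  by rewrite {1}divG raddfD /= opev_skew_mul opevC opev_XsubC.
have c0 : c = 0.
  have := vanish i0 g0; rewrite E0 mem_head opevG => /(_ isT).
  rewrite /twist /b -mulrA mulVr // mulr1 subrr opev0_beta add0r.
  by move/(congr1 (fun z => z * g0^-1)); rewrite -mulrA mulrV // mulr1 mul0r.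
pose fam' i := map (twist (a i) b) (if i == i0 then behead (fam i) else fam i).
suff G'0 : G' = 0 by rewrite divG G'0 skew_mul0l c0 add0r.
apply: (IH G' fam').
- by rewrite (leq_trans (size_skew_quo _ _ _)) // -subn1 leq_subLR add1n.
- rewrite (bigD1 i0) //= in sfam; rewrite (bigD1 i0) //= /fam' eqxx size_map.
  move: sfam; rewrite E0 /= ltnS; congr (_ <= _ + _)%N.
  by apply: eq_bigr => i /negPf ->; rewrite size_map.
- move=> i; rewrite /fam'; case: eqP => [-> | /eqP ii0].
    by rewrite E0; apply: R_free_behead_twist; rewrite -?E0.
  by apply: R_free_map_twist => // beta; apply: twist_inj ii0 g0u.
- move=> i x /mapP [y y_fam ->].
  have y_fam' : y \in fam i by move: y_fam; case: ifP => // _; apply: mem_behead.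
  by have := vanish i y y_fam'; rewrite opevG c0 mul0r addr0.
Qed.

Lemma R_free_seq_of_fam p (v : 'I_p -> S) : R_indep iota v -> R_free (seq_of_fam v).
Proof.
move=> indep_v rr; rewrite size_seq_of_fam => sum0 j ltjp.
apply: (indep_v (fun i => rr i) _ (Ordinal ltjp)).
by rewrite -[RHS]sum0; apply: eq_bigr => i _; rewrite nth_seq_of_fam.
Qed.

Lemma R_indep_unit p (v : 'I_p -> S) : R_indep iota v -> forall j, v j \is a GRing.unit.
Proof.
move=> indep_v j; apply: unit_of_R_torsionfree => r rv0.
move: (indep_v (fun i => if i == j then r else 0)) => /(_ _ j); rewrite eqxx; apply.
by rewrite (bigD1 j) //= eqxx rv0 big1 ?addr0 // => i /negPf ->; rewrite rmorph0 mul0r.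
Qed.

Lemma opev_R_comb ai p (w : 'I_p -> R) (x : 'I_p -> S) (P : {poly S}) :
  opev sigma ai (\sum_(j < p) iota (w j) * x j) P =
  \sum_(j < p) iota (w j) * opev sigma ai (x j) P.
Proof.
by rewrite opev_sum_beta; apply: eq_bigr => j _; rewrite opevM_fixed_beta ?sigma_iota.
Qed.

Lemma skew_poly_eq0_of_vanishing_on (m : 'I_l -> nat) (fam : forall i, 'I_(m i) -> S)
    (G : {poly S}) :
  (size G <= \sum_(i < l) m i)%N -> (forall i, R_indep iota (fam i)) ->
  (forall i j, opev sigma (a i) (fam i j) G = 0) -> G = 0.
Proof.
move=> sG indep vanish.
apply: (@skew_poly_eq0_of_vanishing _ _ (fun i => seq_of_fam (fam i)) sG).
- by rewrite (eq_bigr _ (fun i _ => size_seq_of_fam (fam i))).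
- by move=> i; apply: R_free_seq_of_fam.
- by move=> i x /seq_of_famP [j ->].
Qed.

(* With F(b_ij) beta_ij = c_ij, F - sum_s u_s x^s vanishes on the n R-free beta's. *)
Lemma size_interpolant_codeword (nn : 'I_l -> nat) (beta c : forall i, 'I_(nn i) -> S) k
    (F : {poly S}) :
  (forall i, R_indep iota (beta i)) -> in_LRS sigma k a beta c ->
  (k <= \sum_(i < l) nn i)%N -> (size F <= \sum_(i < l) nn i)%N ->
  (forall i j, opev sigma (a i) (beta i j) F = c i j) -> (size F <= k)%N.
Proof.
move=> indep [u cu] k_le_n size_F opevF.
pose F0 := \sum_(s < k) u s *: 'X^s.
have size_F0 : (size F0 <= k)%N.
  rewrite (leq_trans (size_sum _ _ _)) //; apply/bigmax_leqP => s _.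
  by rewrite (leq_trans (size_scale_leq _ _)) // size_polyXn.
suff FF0 : F - F0 = 0 by rewrite (subr0_eq FF0).
apply: (skew_poly_eq0_of_vanishing_on _ indep).
  by rewrite (leq_trans (size_polyD _ _)) // geq_max size_F size_polyN (leq_trans size_F0).
move=> i j; apply/eqP; rewrite raddfB /= subr_eq0 opevF cu raddf_sum /=.
by apply/eqP; apply: eq_bigr => s _; rewrite opevZXn.
Qed.

End Vanishing.

Lemma dvd_chain_eq0 (R : finComUnitRingType) N rk (dg : nat -> R) :
  (forall i, (i.+1 < N)%N -> exists x, dg i.+1 = x * dg i) ->
  #|[set i : 'I_N | dg i != 0]| = rk -> forall j, (j < N)%N -> (rk <= j)%N -> dg j = 0.
Proof.
move=> chain card_rk j ltjN rk_j; apply/eqP/negP => /negP dgj.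
have dg_below k : (k <= j)%N -> dg (j - k)%N != 0.
  elim: k => [|k IH] ltkj; first by rewrite subn0.
  apply: contraNneq (IH (ltnW ltkj)) => dg0.
  have [x ->] : exists x, dg (j - k)%N = x * dg (j - k.+1)%N.
    by rewrite (_ : j - k = (j - k.+1).+1)%N; [apply: chain | ]; lia.
  by rewrite dg0 mulr0.
have sub : [set widen_ord ltjN i | i : 'I_j.+1] \subset [set i : 'I_N | dg i != 0].
  apply/subsetP => _ /imsetP[i _ ->]; rewrite inE /=.
  by rewrite -(subKn (ltn_ord i : (i <= j)%N)) dg_below // leq_subr.
move: (subset_leq_card sub); rewrite card_imset ?card_ord ?card_rk; last first.
  by move=> x y /(congr1 val) /= /val_inj.
by move/leq_trans/(_ rk_j); rewrite ltnn.
Qed.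

Lemma smith_rank_mulmx_col0 (R : finComUnitRingType) d p (A : 'M[R]_(d, p)) rk :
  smith_rank A rk ->
  exists2 Q : 'M[R]_p, Q \in unitmx & forall i (m : 'I_p), (rk <= m)%N -> (A *m Q) i m = 0.
Proof.
move=> [P [Q [dg [Pu [Qu [PAQ [chain card_rk]]]]]]]; exists Q => // i m rk_m.
have -> : A *m Q = invmx P *m (P *m A *m Q) by rewrite -mulmxA mulKmx.
rewrite PAQ !mxE big1 // => q _; rewrite !mxE.
case: eqP => [qm | _]; last by rewrite mulr0.
by rewrite (dvd_chain_eq0 chain card_rk) ?mulr0 // ?qm // leq_min -qm ltn_ord qm ltn_ord.
Qed.

Section RankKernel.
Variables (R S : finComUnitRingType) (iota : {rmorphism R -> S}).

(* The last p - rk columns of Q, for a Smith form P A Q, are R-relations among u. *)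
Lemma rk_vec_kernel d (xi : S) p (u : 'I_p -> S) rk : rk_vec iota d xi u rk ->
  exists2 W : 'M[R]_(p - rk, p), (forall r : 'rV_(p - rk), r *m W = 0 -> r = 0) &
    forall j, \sum_(l < p) iota (W j l) * u l = 0.
Proof.
move=> [A [uA snf]]; have [Q Qu AQ0] := smith_rank_mulmx_col0 snf.
have sh_lt (j : 'I_(p - rk)) : (rk + j < p)%N by rewrite -ltn_subRL.
pose sh j := Ordinal (sh_lt j).
exists (rowsub sh Q^T) => [r | j].
  rewrite rowsubE mulmxA => /(congr1 (mulmx^~ (invmx Q^T))).
  rewrite mulmxK ?unitmx_tr // mul0mx => r0; apply/rowP => j.
  have := congr1 (fun M : 'rV_p => M 0 (sh j)) r0; rewrite !mxE (bigD1 j) //= !mxE eqxx mulr1.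
  rewrite big1 ?addr0 // => j' j'j; rewrite !mxE.
  by case: eqP => [/(congr1 val)/addnI/val_inj/eqP | _]; rewrite ?(negbTE j'j) ?mulr0.
under eq_bigr do rewrite uA mulr_sumr mxE.
rewrite exchange_big /= big1 // => i _.
transitivity (iota ((A *m Q) i (sh j)) * xi ^+ i); last by rewrite AQ0 ?leq_addr // rmorph0 mul0r.
rewrite mxE rmorph_sum mulr_suml; apply: eq_bigr => l _.
by rewrite !mxE rmorphM; ring.
Qed.

Lemma R_indep_mulmx p q (W : 'M[R]_(q, p)) (v : 'I_p -> S) :
  (forall r : 'rV_q, r *m W = 0 -> r = 0) -> R_indep iota v ->
  R_indep iota (fun j => \sum_(l < p) iota (W j l) * v l).
Proof.
move=> Winj indep r sum0 j.
suff /rowP/(_ j) : \row_j r j = 0 by rewrite !mxE.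
apply: Winj; apply/rowP => l; rewrite [RHS]mxE.
apply: (indep (fun l => (\row_j r j *m W) 0 l)); rewrite -[RHS]sum0.
under eq_bigr do rewrite mxE rmorph_sum mulr_suml.
rewrite exchange_big /=; apply: eq_bigr => j' _; rewrite mulr_sumr.
by apply: eq_bigr => l' _; rewrite mxE rmorphM mulrA.
Qed.

End RankKernel.

Lemma local_quotient_uniformizer (R S : finComUnitRingType) (mR : {set R})
    (iota : {rmorphism R -> S}) (h : {poly R}) (xi : S) :
  chain_ring R -> maximal_ideal mR -> h \is monic -> irreducible_mod mR h ->
  is_quotient_by iota h xi ->
  exists pi e, pi ^+ e = 0 /\ forall y : S, y \isn't a GRing.unit -> in_piS iota pi y.
Proof.
move=> chainR maxmR monic_h irr_h quoS.
have [pi mpi mR_pi] := maximal_ideal_principal chainR maxmR.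
have [e pi_nilp] := maximal_ideal_nilpotent chainR maxmR mpi.
exists pi, e; split=> //.
exact: (nonunit_in_piS chainR maxmR mR_pi pi_nilp monic_h irr_h quoS).
Qed.

(* a_i - sigma(b) a_j b^-1 = - sigma(b) (a_j - sigma(b)^-1 a_i b) b^-1 reduces i > j to j < i. *)
Lemma conj_sep_sym (S : comUnitRingType) (sigma : {rmorphism S -> S}) l (a : 'I_l -> S) :
  (forall i j : 'I_l, (i < j)%N -> forall b, b \is a GRing.unit ->
     a i - sigma b * a j * b^-1 \is a GRing.unit) ->
  forall i j, i != j -> forall b, b \is a GRing.unit ->
     a i - sigma b * a j * b^-1 \is a GRing.unit.
Proof.
move=> sep i j ij b bu; have [lt_ij | lt_ji | /val_inj eq_ij] := ltngtP i j.
- exact: sep.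
- have sbu : sigma b \is a GRing.unit by rewrite rmorph_unit.
  have := sep j i lt_ji b^-1; rewrite unitrV rmorphV // invrK => /(_ bu) sep_ji.
  have -> : a i - sigma b * a j * b^-1 = - (sigma b * (a j - (sigma b)^-1 * a i * b) * b^-1).
    rewrite (_ : sigma b * (a j - (sigma b)^-1 * a i * b) * b^-1 =
      sigma b * a j / b - sigma b / sigma b * a i * (b / b)); last by ring.
    by rewrite !mulrV // mul1r mulr1 opprB.
  by rewrite unitrN !unitrM sbu sep_ji unitrV.
- by rewrite eq_ij eqxx in ij.
Qed.

Lemma decoding_radius_bound l (nn rk : 'I_l -> nat) k :
  (k <= \sum_(i < l) nn i)%N -> (\sum_(i < l) rk i <= (\sum_(i < l) nn i - k)./2)%N ->
  ((\sum_(i < l) nn i - k)./2 + k <= \sum_(i < l) (nn i - rk i))%N.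
Proof.
move=> k_le_n sum_rk; have := odd_double_half (\sum_(i < l) nn i - k); rewrite -addnn.
have : (\sum_(i < l) nn i <= \sum_(i < l) (nn i - rk i) + \sum_(i < l) rk i)%N.
  by rewrite -big_split; apply: leq_sum => i _ /=; lia.
lia.
Qed.

Unset Implicit Arguments. Set Strict Implicit.

Theorem lemma8
  (R S : finComUnitRingType) (mR : {set R}) (iota : {rmorphism R -> S})
  (d : nat) (h : {poly R}) (xi : S) (sigma : {rmorphism S -> S})
  (l : nat) (nn : 'I_l -> nat) (a : 'I_l -> S) (beta : forall i, 'I_(nn i) -> S)
  (k : nat) (c e r : forall i, 'I_(nn i) -> S) (F H L Q : {poly S}) :
  (* standing assumptions on R, S, sigma *)
  chain_ring R -> maximal_ideal mR ->
  injective iota ->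
  h \is monic -> size h = d.+1 -> irreducible_mod mR h ->
  is_quotient_by iota h xi ->
  bijective sigma ->
  (forall y : S, sigma y = y <-> exists r0 : R, y = iota r0) ->
  (forall tau : {rmorphism S -> S}, bijective tau ->
     (forall r0 : R, tau (iota r0) = iota r0) ->
     exists s : nat, forall y, tau y = iter s sigma y) ->
  (forall y : S, in_mS iota mR (sigma y - y ^+ qcard mR)) ->
  (* hypotheses of the lemma *)
  (forall i, a i \is a GRing.unit) ->
  (forall i j : 'I_l, (i < j)%N -> forall b : S, b \is a GRing.unit ->
     a i - sigma b * a j * b^-1 \is a GRing.unit) ->
  (forall i, R_indep iota (beta i)) ->
  (1 <= k <= (\sum_(i < l) nn i) - 1)%N ->
  in_LRS sigma k a beta c ->
  wtSR_le iota d xi e (((\sum_(i < l) nn i) - k)./2) ->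
  (forall i j, r i j = c i j + e i j) ->
  (size F <= \sum_(i < l) nn i)%N ->
  (size H <= \sum_(i < l) nn i)%N ->
  (forall i j, skew_ev sigma F (sigma (beta i j) * a i * (beta i j)^-1) (c i j * (beta i j)^-1)) ->
  (forall i j, skew_ev sigma H (sigma (beta i j) * a i * (beta i j)^-1) (r i j * (beta i j)^-1)) ->
  L \is monic ->
  (size L <= (((\sum_(i < l) nn i) - k)./2).+1)%N ->
  (size Q <= ((\sum_(i < l) nn i) - k)./2 + k)%N ->
  (forall i j, exists z : S,
     skew_ev sigma (skew_mul sigma L H) (sigma (beta i j) * a i * (beta i j)^-1) z /\
     skew_ev sigma Q (sigma (beta i j) * a i * (beta i j)^-1) z) ->
  Q = skew_mul sigma L F.
Proof.
move=> chainR maxmR _ monic_h _ irr_h quoS _ sigma_fixed _ _ a_unit a_lt_sep indep_beta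
  /andP[_ k_lt_n] cod [rk [rk_e sum_rk]] rce size_F _ evF evH _ size_L size_Q evLHQ.
have [pi [e0 [pi_nilp nonunit_pi]]] := local_quotient_uniformizer chainR maxmR monic_h irr_h quoS.
have a_sep := conj_sep_sym a_lt_sep.
have beta_unit i := R_indep_unit pi_nilp nonunit_pi (indep_beta i).
have opevF i j : opev sigma (a i) (beta i j) F = c i j.
  by rewrite (opev_skew_ev (beta_unit i j) (evF i j)) (divrK (beta_unit i j)).
have opev_err i j :
    opev sigma (a i) (beta i j) (Q - skew_mul sigma L F) = opev sigma (a i) (e i j) L.
  have [z [evLH evQ]] := evLHQ i j.
  rewrite raddfB /= opev_skew_mul opevF (opev_skew_ev (beta_unit i j) evQ).
  rewrite -(opev_skew_ev (beta_unit i j) evLH) opev_skew_mul.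
  rewrite (opev_skew_ev (beta_unit i j) (evH i j)) (divrK (beta_unit i j)).
  by rewrite rce opevD_beta addrC addKr.
have k_le_n : (k <= \sum_(i < l) nn i)%N by lia.
have size_F_k : (size F <= k)%N := size_interpolant_codeword pi_nilp sigma_fixed nonunit_pi
  a_unit a_sep indep_beta cod k_le_n size_F opevF.
have /fin_all_exists2 [W W_inj W_e] := fun i => rk_vec_kernel (rk_e i).
have radius := decoding_radius_bound k_le_n sum_rk.
apply: subr0_eq; apply: (skew_poly_eq0_of_vanishing_on pi_nilp sigma_fixed nonunit_pi a_unit a_sep
  (m := fun i => (nn i - rk i)%N) (fam := fun i j => \sum_(l0 < nn i) iota (W i j l0) * beta i l0)).
- rewrite (leq_trans (size_polyD _ _)) // geq_max size_polyN (leq_trans size_Q radius) /=.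
  by rewrite (leq_trans (size_skew_mul _ _ _)) // (leq_trans _ radius) //; lia.
- by move=> i; apply: R_indep_mulmx (W_inj i) (indep_beta i).
- move=> i j; rewrite (opev_R_comb sigma_fixed); under eq_bigr do rewrite opev_err.
  by rewrite -(opev_R_comb sigma_fixed) W_e opev0_beta.
Qed.
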